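(* Let $K$ be a valued field and $d\ge1$. The Helly number of $\operatorname{Conv}_{K^d}$ is exactly $d+1$: for every $n$ and all convex $S_1,\dots,S_n\subseteq K^d$, if every $d+1$ of them have nonempty common intersection then $\bigcap_{i=1}^nS_i\ne\emptyset$; and there exist convex sets in $K^d$ any $d$ of which intersect but whose total intersection is empty.
   Context: $K$ is a field with valuation $\nu$ and valuation ring $\mathcal{O}=\{x:\nu(x)\ge0\}$. A set $X\subseteq K^d$ is convex if it is closed under combinations $\sum_{i=1}^n\alpha_ix_i$ with $x_i\in X$, $\alpha_i\in\mathcal{O}$, $\sum\alpha_i=1$; $\operatorname{Conv}_{K^d}$ is the family of all convex subsets of $K^d$. The Helly number of a family $\mathcal{F}$ is the least $k$ such that for any finitely many $S_1,\dots,S_n\in\mathcal{F}$, if every $k$ of them have nonempty intersection then all of them do. *)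

From HB Require Import structures.
From mathcomp Require Import all_boot all_order all_algebra.
Set Implicit Arguments. Unset Strict Implicit. Unset Printing Implicit Defensive.
Import Order.TTheory GRing.Theory Num.Theory.
Local Open Scope ring_scope.

(* Order on Gamma ∪ {∞}, where None represents ∞. *)
Definition ole (Γ : Type) (le : rel Γ) (a b : option Γ) : bool :=
  match a, b with
  | _, None => true
  | None, Some _ => false
  | Some x, Some y => le x y
  end.

Definition oadd (Γ : zmodType) (a b : option Γ) : option Γ :=
  match a, b with
  | Some x, Some y => Some (x + y)
  | _, _ => None
  end.

Record is_ordered_group (Γ : zmodType) (le : rel Γ) : Prop := {
  og_refl : forall a, le a a;
  og_trans : forall a b c, le a b -> le b c -> le a c;
  og_antisym : forall a b, le a b -> le b a -> a = b;
  og_total : forall a b, le a b || le b a;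
  og_add : forall a b c, le a b -> le (a + c) (b + c)
}.

Record is_valuation (K : fieldType) (Γ : zmodType) (le : rel Γ)
    (v : K -> option Γ) : Prop := {
  val_group : is_ordered_group le;
  val_zero : v 0 = None;
  val_nonzero : forall x, x != 0 -> v x <> None;
  val_mul : forall x y, v (x * y) = oadd (v x) (v y);
  (* min(v x, v y) <= v (x + y) *)
  val_add : forall x y, ole le (v x) (v (x + y)) || ole le (v y) (v (x + y))
}.

Definition val_ring (K : fieldType) (Γ : zmodType) (le : rel Γ)
    (v : K -> option Γ) (x : K) : Prop := ole le (Some 0) (v x).

Definition vconvex (K : fieldType) (Γ : zmodType) (le : rel Γ)
    (v : K -> option Γ) (d : nat) (X : 'rV[K]_d -> Prop) : Prop :=
  forall (n : nat) (x : 'I_n -> 'rV[K]_d) (a : 'I_n -> K),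
    (forall i, X (x i)) -> (forall i, val_ring le v (a i)) ->
    \sum_(i < n) a i = 1 ->
    X (\sum_(i < n) a i *: x i).

From HB Require Import structures.
From mathcomp Require Import all_boot all_order all_algebra.
Import Order.TTheory GRing.Theory Num.Theory.
Local Open Scope ring_scope.

(* The valued analogue of Radon's lemma: among k > d+1 points
   y_t of K^d there is an affine dependence sum lam_t y_t = 0, sum lam_t = 0;
   dividing by a coefficient lam_t0 of minimal valuation turns it into an
   expression of y_t0 as an O-combination (coefficients in the valuation
   ring, summing to 1) of the other points.  Helly then follows by induction
   on the number of sets: given m > d+1 convex sets, each m-1 of which meet
   in a point f_j, the point f_t0 singled out by the lemma lies in S_t0 by
   convexity and in every other S_j by choice.

   The d coordinate hyperplanes x_j = 0 together with the
   hyperplane x_0 + ... + x_(d-1) = 1 are convex (affine hyperplanes are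
   closed under all affine combinations); any d of them meet, all d+1 do not. *)

Section OrderedGroup.

Context {Γ : zmodType} {le : rel Γ} (og : is_ordered_group le).

Lemma og_double_eq0 (h : Γ) : h + h = 0 -> h = 0.
Proof.
move=> hh; have [h_ge0|h_le0] := orP (og_total og 0 h).
  have := og_add og h h_ge0; rewrite add0r hh => h_le0.
  exact: og_antisym og _ _ h_le0 h_ge0.
have := og_add og h h_le0; rewrite add0r hh => h_ge0.
exact: og_antisym og _ _ h_le0 h_ge0.
Qed.

Lemma ole_trans : transitive (ole le).
Proof. by move=> [b|] [a|] [c|] //=; apply: og_trans. Qed.

Lemma ole_total : total (ole le).
Proof. by move=> [a|] [b|] //=; apply: og_total. Qed.

End OrderedGroup.

Section ValuationFacts.

Context {K : fieldType} {Γ : zmodType} {le : rel Γ} {v : K -> option Γ}.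
Hypothesis hv : is_valuation le v.

(* v 1 = 0, the only solution of g = g + g. *)
Lemma val_one : v 1 = Some 0.
Proof.
have := val_mul hv 1 1; rewrite mulr1.
case e1: (v 1) => [g|] /=; last by have := val_nonzero hv (oner_neq0 K).
by move=> [] /(congr1 (fun x => x - g)); rewrite addrK subrr => <-.
Qed.

(* v(-1) = 0, since 2 v(-1) = v 1 = 0; hence v(-x) = v x. *)
Lemma val_opp (x : K) : v (- x) = v x.
Proof.
have vN1 : v (-1) = Some 0.
  have := val_mul hv (-1) (-1); rewrite mulrNN mulr1 val_one.
  by case: (v (-1)) => [h|] //= [/esym/(og_double_eq0 (val_group hv)) ->].
by rewrite -mulN1r (val_mul hv) vN1; case: (v x) => //= g; rewrite add0r.
Qed.

Lemma val_ring_div {x y : K} :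
  x != 0 -> ole le (v x) (v y) -> val_ring le v (y / x).
Proof.
move=> x_neq0; case vx: (v x) => [c|]; last by have := val_nonzero hv x_neq0.
have vVx : v x^-1 = Some (- c).
  have := val_mul hv x x^-1; rewrite mulfV // val_one vx.
  by case: (v x^-1) => [g|] //= [/esym/eqP]; rewrite addrC addr_eq0 => /eqP ->.
rewrite /val_ring (val_mul hv) vVx; case: (v y) => [b|] //= c_le_b.
by rewrite -(subrr c); apply: og_add (val_group hv) _ _ _ c_le_b.
Qed.

End ValuationFacts.

Lemma exists_argmin {T : finType} {A : Type} {r : rel A} (f : T -> A) :
  transitive r -> total r -> T -> exists m, forall t, r (f m) (f t).
Proof.
move=> r_trans r_total x0; pose rf := [rel a b : T | r (f a) (f b)].
have rf_trans : transitive rf by move=> b a c; apply: r_trans.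
have : sorted rf (sort rf (enum T)) by apply: sort_sorted => a b; apply: r_total.
have mem_s t : t \in sort rf (enum T) by rewrite mem_sort mem_enum.
case: (sort rf (enum T)) mem_s => [/(_ x0)//|m s] mem_s.
move=> /(order_path_min rf_trans)/allP m_min.
exists m => t; have := mem_s t; rewrite inE => /predU1P [->|/m_min//].
by have := r_total (f m) (f m); rewrite orbb.
Qed.

Lemma affine_dependence {K : fieldType} {d k : nat} (y : 'I_k -> 'rV[K]_d) :
  (d.+1 < k)%N ->
  exists lam : 'I_k -> K, (exists i, lam i != 0) /\
    \sum_i lam i *: y i = 0 /\ \sum_i lam i = 0.
Proof.
move=> d_lt_k.
pose A := row_mx (\matrix_i y i) (const_mx 1 : 'M[K]_(k, 1)).
have ker_neq0 : kermx A != 0.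
  rewrite kermx_eq0 -row_leq_rank -ltnNge.
  by apply: leq_ltn_trans (rank_leq_col A) _; rewrite addn1.
have [i row_neq0] : exists i, row i (kermx A) != 0.
  apply/existsP; apply: contraR ker_neq0; rewrite negb_exists => /forallP rows0.
  by apply/eqP/row_matrixP => i; move: (rows0 i); rewrite negbK row0 => /eqP.
set u := row i (kermx A) in row_neq0.
have : u *m A = 0 by rewrite /u -row_mul mulmx_ker row0.
rewrite mul_mx_row -row_mx0 => /eq_row_mx [uY u1]; clearbody u.
exists (u 0); split; [|split].
- apply/existsP; apply: contraR row_neq0; rewrite negb_exists => /forallP u0.
  by apply/eqP/rowP => j; rewrite mxE; move: (u0 j); rewrite negbK => /eqP.
- by rewrite -[RHS]uY mulmx_sum_row; apply: eq_bigr => j _; rewrite rowK.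
- have := congr1 (fun M : 'M_1 => M 0 0) u1; rewrite mxE [RHS]mxE => sum_u.
  by rewrite -[RHS]sum_u; apply: eq_bigr => j _; rewrite mxE mulr1.
Qed.

Lemma valued_radon {K : fieldType} {Γ : zmodType} {le : rel Γ} {v : K -> option Γ}
    {d k : nat} (y : 'I_k -> 'rV[K]_d) :
  is_valuation le v -> (d.+1 < k)%N ->
  exists t0 (mu : 'I_k -> K),
    [/\ mu t0 = 0, forall t, val_ring le v (mu t), \sum_t mu t = 1
      & y t0 = \sum_t mu t *: y t].
Proof.
move=> hv d_lt_k; have og := val_group hv.
have [lam [[i1 lam_i1] [dep_y dep_1]]] := affine_dependence y d_lt_k.
have [t0 t0_min] := exists_argmin (v \o lam) (ole_trans og) (ole_total og) i1.
have lam_t0 : lam t0 != 0.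
  apply/eqP => lam0; have := t0_min i1; rewrite /= lam0 (val_zero hv).
  by case: (v (lam i1)) (val_nonzero hv lam_i1).
pose mu t := if t == t0 then 0 else - (lam t / lam t0).
(* Normalising a relation sum_t lam_t g_t = 0 by -lam_t0 isolates g_t0. *)
have normalise (T : lmodType K) (g : 'I_k -> T) :
    \sum_t lam t *: g t = 0 -> \sum_t mu t *: g t = g t0.
  rewrite (bigD1 t0) //= => /eqP; rewrite addrC addr_eq0 => /eqP sum_off.
  rewrite (bigD1 t0) //= /mu eqxx scale0r add0r.
  rewrite (eq_bigr (fun t => - (lam t0)^-1 *: (lam t *: g t))); last first.
    by move=> t /negbTE->; rewrite scalerA mulrC mulNr.
  by rewrite -scaler_sumr sum_off scaleNr scalerN opprK scalerA mulVf ?scale1r.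
exists t0, mu; split.
- by rewrite /mu eqxx.
- move=> t; rewrite /mu; case: eqP => _; first by rewrite /val_ring (val_zero hv).
  by have := val_ring_div hv lam_t0 (t0_min t); rewrite /val_ring (val_opp hv).
- have /normalise : \sum_t lam t *: (1 : K^o) = 0.
    by rewrite -[RHS]dep_1; apply: eq_bigr => t _; rewrite [_ *: _]mulr1.
  by under eq_bigr => t _ do rewrite [_ *: _]mulr1.
- by rewrite normalise.
Qed.

Lemma vconvex_support {K : fieldType} {Γ : zmodType} {le : rel Γ} {v : K -> option Γ}
    {d n : nat} {X : 'rV[K]_d -> Prop} (x : 'I_n -> 'rV[K]_d) (a : 'I_n -> K) :
  vconvex le v X -> (forall i, a i != 0 -> X (x i)) ->
  (forall i, val_ring le v (a i)) -> \sum_i a i = 1 -> X (\sum_i a i *: x i).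
Proof.
move=> X_convex X_x a_O a_sum1.
have [i1 a_i1] : exists i1, a i1 != 0.
  apply/existsP; apply: contraTT (oner_neq0 K); rewrite negb_exists => /forallP a0.
  rewrite negbK -a_sum1 big1 // => i _.
  by apply/eqP; move: (a0 i); rewrite negbK.
pose x' i := if a i == 0 then x i1 else x i.
have -> : \sum_i a i *: x i = \sum_i a i *: x' i.
  by apply: eq_bigr => i _; rewrite /x'; case: eqP => [->|]; rewrite ?scale0r.
by apply: X_convex => // i; rewrite /x'; case: eqP => [_|/eqP]; apply: X_x.
Qed.

Lemma helly_step {K : fieldType} {Γ : zmodType} {le : rel Γ} {v : K -> option Γ}
    {d n : nat} (S : 'I_n -> 'rV[K]_d -> Prop) (J : {set 'I_n})
    (f : 'I_n -> 'rV[K]_d) :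
  is_valuation le v -> (forall i, vconvex le v (S i)) -> (d.+1 < #|J|)%N ->
  (forall i j, i \in J -> j \in J -> i != j -> S i (f j)) ->
  exists x, forall i, i \in J -> S i x.
Proof.
move=> hv S_convex J_big f_avoid.
have [t0 [mu [mu_t0 mu_O mu_sum1 y_t0]]] :=
  valued_radon (f \o enum_val) hv J_big.
exists (f (enum_val t0)) => i iJ.
have [-> | i_neq] := eqVneq i (enum_val t0); last exact: f_avoid (enum_valP _) _.
have -> : f (enum_val t0) = \sum_t mu t *: f (enum_val t) := y_t0.
apply: vconvex_support => // t mu_t.
apply: f_avoid; rewrite ?enum_valP //.
by apply: contraNneq mu_t => /enum_val_inj <-; rewrite mu_t0.
Qed.

Lemma helly {K : fieldType} {Γ : zmodType} {le : rel Γ} {v : K -> option Γ}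
    {d n : nat} (S : 'I_n -> 'rV[K]_d -> Prop) :
  is_valuation le v -> (forall i, vconvex le v (S i)) ->
  (forall J : {set 'I_n}, (#|J| <= d.+1)%N -> exists x, forall i, i \in J -> S i x) ->
  exists x, forall i, S i x.
Proof.
move=> hv S_convex small_meet.
suff meet m (J : {set 'I_n}) : (#|J| <= m)%N -> exists x, forall i, i \in J -> S i x.
  have [|x Sx] := meet n setT; first by rewrite cardsT card_ord.
  by exists x => i; apply: Sx; rewrite inE.
elim: m J => [|m IHm] J J_le; first by apply: small_meet; apply: leq_trans J_le _.
have [J_small|J_big] := leqP #|J| d.+1; first exact: small_meet.
have [J_le_m|_] := leqP #|J| m; first exact: IHm.
have /fin_all_exists [f f_avoid] : forall j, exists x : 'rV[K]_d,
    j \in J -> forall i, i \in J :\ j -> S i x.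
  move=> j; have [jJ|_] := boolP (j \in J); last by exists 0.
  have [|x Sx] := IHm (J :\ j); last by exists x.
  by move: J_le; rewrite (cardsD1 j J) jJ add1n ltnS.
apply: helly_step hv S_convex J_big _ => i j iJ jJ i_neq.
by apply: (f_avoid j jJ i); rewrite in_setD1 i_neq iJ.
Qed.

Lemma hyperplane_convex {K : fieldType} {Γ : zmodType} {le : rel Γ}
    {v : K -> option Γ} {d : nat} (a : 'I_d -> K) (b : K) :
  vconvex le v (fun x : 'rV[K]_d => \sum_j a j * x 0 j = b).
Proof.
move=> n x mu x_on _ mu_sum1.
transitivity (\sum_(t < n) mu t * b); last by rewrite -mulr_suml mu_sum1 mul1r.
under eq_bigr => j _ do rewrite summxE mulr_sumr.
by rewrite exchange_big; apply: eq_bigr => t _; rewrite -(x_on t) mulr_sumr;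
  apply: eq_bigr => j _; rewrite mxE mulrCA.
Qed.

(* The d+1 facet hyperplanes of the standard simplex of K^d: facet (lift j)
   is the coordinate hyperplane x_j = 0, facet ord_max is x_0+...+x_(d-1) = 1. *)
Definition facet_coef {K : fieldType} {d : nat} (i : 'I_d.+1) (j : 'I_d) : K :=
  if i == ord_max then 1 else (j == i :> nat)%:R.

Definition facet {K : fieldType} {d : nat} (i : 'I_d.+1) (x : 'rV[K]_d) : Prop :=
  \sum_j facet_coef i j * x 0 j = (i == ord_max)%:R.

Lemma facet_liftE {K : fieldType} {d : nat} (j : 'I_d) (x : 'rV[K]_d) :
  facet (lift ord_max j) x <-> x 0 j = 0.
Proof.
have lift_neq : lift ord_max j != ord_max by rewrite eq_sym neq_lift.
rewrite /facet (negbTE lift_neq).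
suff -> : \sum_k facet_coef (lift ord_max j) k * x 0 k = x 0 j by [].
rewrite (bigD1 j) // big1 => [|k k_neq]; rewrite /facet_coef (negbTE lift_neq) lift_max.
  by rewrite eqxx mul1r /= addr0.
have /negbTE-> : (k : nat) != j by rewrite val_eqE.
by rewrite mul0r.
Qed.

Lemma facet_maxE {K : fieldType} {d : nat} (x : 'rV[K]_d) :
  facet ord_max x <-> \sum_j x 0 j = 1.
Proof.
by rewrite /facet /facet_coef eqxx; under eq_bigr => j _ do rewrite mul1r.
Qed.

(* Any d of the facets meet: at the origin if the facet ord_max is omitted,
   otherwise at the unit vector e_j of an omitted coordinate facet. *)
Lemma facets_meet {K : fieldType} {d : nat} (J : {set 'I_d.+1}) :
  (#|J| <= d)%N -> exists x : 'rV[K]_d, forall i, i \in J -> facet i x.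
Proof.
move=> J_small.
have [maxJ|maxNJ] := boolP (ord_max \in J); last first.
  exists 0 => i iJ; case: (unliftP ord_max i) => [j ->|i_max].
    by apply/facet_liftE; rewrite mxE.
  by rewrite -i_max iJ in maxNJ.
have /subsetPn [i0 _ i0NJ] : ~~ ([set: 'I_d.+1] \subset J).
  by rewrite subTset; apply: contraTneq J_small => ->; rewrite cardsT card_ord ltnn.
have [j0 i0_def|i0_max] := unliftP ord_max i0; last by rewrite i0_max maxJ in i0NJ.
exists (delta_mx 0 j0) => i iJ; case: (unliftP ord_max i) => [j i_def|->].
  rewrite i_def; apply/facet_liftE; rewrite mxE /=; have /negbTE-> // : j != j0.
  by apply: contraNneq i0NJ => j_def; rewrite i0_def -j_def -i_def.
apply/facet_maxE; rewrite (bigD1 j0) // big1 => [|j j_neq].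
  by rewrite mxE !eqxx /= addr0.
by rewrite mxE (negbTE j_neq).
Qed.

(* All d+1 facets have empty intersection: the coordinate facets force x = 0,
   which is not on the facet ord_max. *)
Lemma facets_disjoint {K : fieldType} {d : nat} :
  ~ exists x : 'rV[K]_d, forall i, facet i x.
Proof.
case=> x on_all; have /facet_maxE := on_all ord_max; rewrite big1.
  by move/eqP; rewrite eq_sym oner_eq0.
by move=> j _; apply/facet_liftE.
Qed.

(* The Helly number of Conv(K^d) is d+1. *)
Theorem theorem4p5 (K : fieldType) (Γ : zmodType) (le : rel Γ)
    (v : K -> option Γ) (d : nat) :
  is_valuation le v -> (1 <= d)%N ->
  (forall (n : nat) (S : 'I_n -> 'rV[K]_d -> Prop),
     (forall i, vconvex le v (S i)) ->
     (forall J : {set 'I_n}, (#|J| <= d.+1)%N ->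
        exists x : 'rV[K]_d, forall i, i \in J -> S i x) ->
     exists x : 'rV[K]_d, forall i, S i x)
  /\
  (exists (n : nat) (S : 'I_n -> 'rV[K]_d -> Prop),
     (forall i, vconvex le v (S i)) /\
     (forall J : {set 'I_n}, (#|J| <= d)%N ->
        exists x : 'rV[K]_d, forall i, i \in J -> S i x) /\
     ~ (exists x : 'rV[K]_d, forall i, S i x)).
Proof.
move=> hv _; split=> [n S S_convex small_meet|]; first exact: helly hv S_convex small_meet.
exists d.+1, facet; split; [|split].
- by move=> i; apply: hyperplane_convex.
- exact: facets_meet.
- exact: facets_disjoint.
Qed.
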